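(* Let $k$ be a positive integer and let $\mathcal{A}$ be a monotone decreasing family of subsets of $\{0,1,\ldots,k-1\}$ (i.e., every subset of a member of $\mathcal{A}$ is also a member of $\mathcal{A}$). Let $$A=\{3^{a_1}+3^{a_2}+\cdots+3^{a_n}\mid \{a_1,a_2,\ldots,a_n\}\in \mathcal{A}\}.$$ Then the Stanley sequences $S(A\cup \{3^k\})$ and $S(A\cup \{2\cdot 3^k\})$ are independent.
   Context: A set of non-negative integers is 3-free if no three of its elements form an arithmetic progression. For a finite 3-free set $A=\{a_0<a_1<\cdots<a_k\}$ of non-negative integers, the Stanley sequence $S(A)=(a_n)_{n\ge 0}$ is the increasing sequence whose initial terms are $a_0,\ldots,a_k$ and in which, once $a_n$ is defined, $a_{n+1}$ is the smallest integer greater than $a_n$ such that $\{a_0,\ldots,a_{n+1}\}$ is 3-free. A Stanley sequence $(a_n)$ is independent if there is a constant $\lambda$ (its character) such that for all sufficiently large $k$, $a_{2^k+i}=a_{2^k}+a_i$ for all $0\le i<2^k$, and $a_{2^k}=2a_{2^k-1}-\lambda+1$. *)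

From mathcomp Require Import all_boot all_order all_algebra.
Import GRing.Theory.
Set Implicit Arguments. Unset Strict Implicit. Unset Printing Implicit Defensive.

Definition three_free (s : seq nat) : bool :=
  all (fun x => all (fun y => all (fun z =>
    ~~ ((x < y < z) && (x + z == y.*2))) s) s) s.

(* The search is
   over m in (l, 2l+2], which always contains such an m (e.g. 2l+1). *)
Definition next_term (s : seq nat) : nat :=
  let l := last 0 s in
  l.+1 + find (fun j => three_free (rcons s (l.+1 + j))) (iota 0 l.+2).

Definition extend (s : seq nat) (n : nat) : seq nat :=
  iter n (fun t => rcons t (next_term t)) s.

Definition stanley (A : seq nat) (n : nat) : nat :=
  nth 0 (extend (sort leq (undup A)) n.+1) n.

Definition independent (a : nat -> nat) : Prop :=
  exists (lambda : int) (K : nat), forall k, K <= k ->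
    (forall i, i < 2 ^ k -> a (2 ^ k + i) = a (2 ^ k) + a i) /\
    Posz (a (2 ^ k)) = (2 * Posz (a (2 ^ k - 1)%N) - lambda + 1)%R.

Definition down_closed (k : nat) (F : {set {set 'I_k}}) : Prop :=
  forall X Y : {set 'I_k}, X \in F -> Y \subset X -> Y \in F.

Definition ternary_set (k : nat) (F : {set {set 'I_k}}) : seq nat :=
  [seq (\sum_(a in X) 3 ^ (nat_of_ord a))%N | X : {set 'I_k} in F].

(* Let T = S({0}) be the set of naturals with ternary digits 0 and 1, and let
   A <= T be the set of the statement.  Both Stanley sequences are the
   increasing enumerations of a set
     { w + 3^k h | w < 3^k, w in T, h in UA if w in A, h in UD otherwise },
   with (UA, UD) = (T, 1 + T) for S(A u {3^k}) and
   (UA, UD) = (3T u (3T + 2), 2 + T) for S(A u {2 3^k}).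
   Such a set contains no 3-term progression because T contains none, and
   every larger integer outside it is the top of a progression of two smaller
   members: write its low part as 2b - a with a, b in T and a below b digit by
   digit, so that a lies in A whenever b does, A being downward closed.  Hence
   the greedy algorithm produces exactly this set.  Finally UA and UD are
   invariant under translation by 3^p and avoid [2 3^p, 3^(p+1)) (p >= 2), so the set
   below N 3^(j+1) (N = 9 3^k) is the set below N 3^j together with its
   translate by N 3^j, i.e. a_(2^(k+2+j) + i) = N 3^j + a_i. *)

From mathcomp Require Import all_boot all_order all_algebra zify.
Set Implicit Arguments. Unset Strict Implicit. Unset Printing Implicit Defensive.

Definition ap3_free (P : pred nat) : Prop :=
  forall a b c, P a -> P b -> P c -> a + c = 2 * b -> a = b.

Definition tdigit (i n : nat) : nat := n %/ 3 ^ i %% 3.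

(* S({0}); digits of index > n vanish, so only indices <= n are checked. *)
Definition ternary01 (n : nat) : bool := all (fun i => tdigit i n < 2) (iota 0 n.+1).

Lemma tdigit_small i n : n < 3 ^ i -> tdigit i n = 0.
Proof. by move=> lt_n; rewrite /tdigit divn_small. Qed.

Lemma tdigit0 n : tdigit 0 n = n %% 3.
Proof. by rewrite /tdigit expn0 divn1. Qed.

Lemma tdigitS i n : tdigit i.+1 n = tdigit i (n %/ 3).
Proof. by rewrite /tdigit expnS divnMA. Qed.

Lemma modn_digit r a : r < 3 -> (r + 3 * a) %% 3 = r.
Proof. lia. Qed.

Lemma divn_digit r a : r < 3 -> (r + 3 * a) %/ 3 = a.
Proof. lia. Qed.

Lemma ternary01P n : reflect (forall i, tdigit i n < 2) (ternary01 n).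
Proof.
apply: (iffP allP) => [dig i|dig i _]; last exact: dig.
case: (ltnP i n.+1) => [lt_i|le_i]; first by apply: dig; rewrite mem_iota.
rewrite tdigit_small //; apply: leq_trans (ltn_expl i (isT : 1 < 3)); exact: ltnW.
Qed.

Lemma ternary01E n : ternary01 n = (n %% 3 < 2) && ternary01 (n %/ 3).
Proof.
apply/ternary01P/andP => [dig|[dig0 /ternary01P dig] [|i]].
- by split; [rewrite -tdigit0 | apply/ternary01P => i; rewrite -tdigitS].
- by rewrite tdigit0.
- by rewrite tdigitS.
Qed.

Lemma ternary01_digit r a : r < 3 -> ternary01 (r + 3 * a) = (r < 2) && ternary01 a.
Proof. by move=> lt_r; rewrite ternary01E modn_digit // divn_digit. Qed.

Lemma ternary01_mod3_2 n : n %% 3 = 2 -> ternary01 n = false.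
Proof. by move=> n2; rewrite ternary01E n2. Qed.

Lemma ternary01_ap3_free : ap3_free ternary01.
Proof.
move=> a b; elim/ltn_ind: b a => b IH a c Ta Tb Tc e.
case: (posnP b) => [b0|b_gt0]; first by lia.
move: Ta Tb Tc; rewrite !(ternary01E a) !(ternary01E b) !(ternary01E c).
move=> /andP[ra Ta] /andP[rb Tb] /andP[rc Tc].
have := IH (b %/ 3) ltac:(lia) _ _ Ta Tb Tc ltac:(lia).
lia.
Qed.

(* Every m is the difference 2b - a of two elements of S({0}), with a below b
   digit by digit; the digits are chosen from the last one upwards:
   0 = 2*0 - 0, 1 = 2*1 - 1, 2 = 2*1 - 0. *)
Lemma ternary01_midpoint m : exists a b,
  [/\ ternary01 a, ternary01 b, a + m = 2 * b, b <= m &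
      forall i, tdigit i a <= tdigit i b].
Proof.
elim/ltn_ind: m => m IH.
case: (posnP m) => [->|m_gt0]; first by exists 0, 0.
have [a [b [Ta Tb e le_b dig]]] := IH (m %/ 3) ltac:(lia).
have [ra [rb [lt_ra lt_rb er le_r]]] :
    exists ra rb, [/\ ra < 2, rb < 2, ra + m %% 3 = 2 * rb & ra <= rb].
  have : m %% 3 < 3 by rewrite ltn_mod.
  by case: (m %% 3) => [|[|[|]]] // _; [exists 0, 0 | exists 1, 1 | exists 0, 1].
exists (ra + 3 * a), (rb + 3 * b); rewrite !ternary01_digit ?lt_ra ?lt_rb //=; try by lia.
split=> //; try lia.
by case=> [|i]; rewrite ?tdigit0 ?tdigitS ?modn_digit ?divn_digit //; lia.
Qed.

Lemma ternary01_midpoint_odd_lt m : 0 < m -> exists a b,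
  [/\ ternary01 a, ternary01 b, a + m = 2 * b + 1 & b < m].
Proof.
elim/ltn_ind: m => m IH m_gt0.
have : m %% 3 < 3 by rewrite ltn_mod.
case E: (m %% 3) => [|[|[|]]] // _.
- have [a [b [Ta Tb e lt_b]]] := IH (m %/ 3) ltac:(lia) ltac:(lia).
  exists (0 + 3 * a), (1 + 3 * b); rewrite !ternary01_digit //; split=> //; lia.
- have [a [b [Ta Tb e le_b _]]] := ternary01_midpoint (m %/ 3).
  exists (0 + 3 * a), (0 + 3 * b); rewrite !ternary01_digit //; split=> //; lia.
- have [a [b [Ta Tb e le_b _]]] := ternary01_midpoint (m %/ 3).
  exists (1 + 3 * a), (1 + 3 * b); rewrite !ternary01_digit //; split=> //; lia.
Qed.

Lemma ternary01_midpoint_odd m : exists a b,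
  [/\ ternary01 a, ternary01 b, a + m = 2 * b + 1 & b <= m].
Proof.
case: (posnP m) => [->|m_gt0]; first by exists 1, 0.
have [a [b [Ta Tb e lt_b]]] := ternary01_midpoint_odd_lt m_gt0.
by exists a, b; split=> //; lia.
Qed.

Lemma ternary01_high p h r : h < 3 ^ p -> r < 3 ->
  ternary01 (h + 3 ^ p * r) = ternary01 h && (r < 2).
Proof.
elim: p h => [|p IH] h lt_h lt_r.
  have -> : h = 0 by rewrite expn0 in lt_h; lia.
  rewrite expn0 mul1n add0n andbC.
  by have := ternary01_digit 0 lt_r; rewrite muln0 addn0.
have -> : h + 3 ^ p.+1 * r = h %% 3 + 3 * (h %/ 3 + 3 ^ p * r).
  by rewrite expnS {1}(divn_eq h 3); lia.
rewrite ternary01_digit ?ltn_mod // IH ?(ternary01E h) ?andbA //.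
by rewrite expnS in lt_h; lia.
Qed.

Lemma ternary01_shift p h : h < 3 ^ p -> ternary01 (3 ^ p + h) = ternary01 h.
Proof. by move=> lt_h; rewrite addnC -(muln1 (3 ^ p)) ternary01_high // andbT. Qed.

Lemma ternary01_shift2 p h : h < 3 ^ p -> ternary01 (3 ^ p + 3 ^ p + h) = false.
Proof.
move=> lt_h; have -> : 3 ^ p + 3 ^ p + h = h + 3 ^ p * 2 by lia.
by rewrite ternary01_high // andbF.
Qed.

Lemma ternary01_double_lt k w : ternary01 w -> w < 3 ^ k -> 2 * w < 3 ^ k.
Proof.
elim: k w => [|k IH] w; first by rewrite expn0; lia.
rewrite ternary01E => /andP[lt_r Tw] lt_w.
have := IH _ Tw ltac:(rewrite expnS in lt_w; lia).
by rewrite expnS (divn_eq w 3); lia.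
Qed.

Lemma sum_pow3S k (c : nat -> nat) :
  \sum_(i < k.+1) c i * 3 ^ i = c 0 + 3 * \sum_(i < k) c i.+1 * 3 ^ i.
Proof.
rewrite big_ord_recl /= expn0 muln1 big_distrr /=; congr (_ + _).
by apply: eq_bigr => i _; rewrite /bump /= add1n expnS mulnCA.
Qed.

Lemma sum_pow3_lt k (c : nat -> nat) :
  (forall i, c i < 3) -> \sum_(i < k) c i * 3 ^ i < 3 ^ k.
Proof.
elim: k c => [|k IH] c lt_c; first by rewrite big_ord0.
rewrite sum_pow3S expnS; have := IH (fun i => c i.+1) (fun i => lt_c i.+1).
by have := lt_c 0; lia.
Qed.

Lemma tdigit_sum_pow3 k (c : nat -> nat) j : (forall i, c i < 3) ->
  tdigit j (\sum_(i < k) c i * 3 ^ i) = if j < k then c j else 0.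
Proof.
elim: k c j => [|k IH] c j lt_c.
  by rewrite big_ord0 /tdigit div0n mod0n; case: j.
have lt_c0 := lt_c 0.
case: j => [|j]; rewrite sum_pow3S ?tdigit0 ?tdigitS ?modn_digit ?divn_digit //.
exact: (IH (fun i => c i.+1)).
Qed.

Lemma ternary_expansion k n : n < 3 ^ k -> n = \sum_(i < k) tdigit i n * 3 ^ i.
Proof.
elim: k n => [|k IH] n lt_n; first by rewrite big_ord0; rewrite expn0 in lt_n; lia.
rewrite (sum_pow3S k (tdigit ^~ n)) /= tdigit0.
under eq_bigr do rewrite tdigitS.
by rewrite -IH; [rewrite {1}(divn_eq n 3); lia | rewrite expnS in lt_n; lia].
Qed.

Definition set_indicator k (X : {set 'I_k}) (i : nat) : nat :=
  [exists a : 'I_k, (nat_of_ord a == i) && (a \in X)].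

Lemma set_indicator_ord k (X : {set 'I_k}) (a : 'I_k) : set_indicator X a = (a \in X).
Proof.
congr nat_of_bool; apply/existsP/idP => [[b /andP[/eqP/val_inj -> //]]|Xa].
by exists a; rewrite eqxx.
Qed.

Lemma set_indicator_lt k (X : {set 'I_k}) i : set_indicator X i < 2.
Proof. by rewrite /set_indicator; case: existsP. Qed.

Lemma sum_set_pow3 k (X : {set 'I_k}) :
  \sum_(a in X) 3 ^ a = \sum_(i < k) set_indicator X i * 3 ^ i.
Proof.
rewrite big_mkcond /=; apply: eq_bigr => a _; rewrite set_indicator_ord.
by case: (a \in X); rewrite ?mul1n ?mul0n.
Qed.

Lemma tdigit_sum_set k (X : {set 'I_k}) j :
  tdigit j (\sum_(a in X) 3 ^ a) = if j < k then set_indicator X j else 0.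
Proof.
by rewrite sum_set_pow3 tdigit_sum_pow3 // => i; have := set_indicator_lt X i; lia.
Qed.

Lemma ternary_setP k (F : {set {set 'I_k}}) x :
  reflect (exists2 X, X \in F & x = \sum_(a in X) 3 ^ a) (x \in ternary_set F).
Proof. by apply: (iffP imageP) => [[X FX ->]|[X FX ->]]; exists X. Qed.

Lemma ternary_set_ternary01 k (F : {set {set 'I_k}}) x :
  x \in ternary_set F -> x < 3 ^ k /\ ternary01 x.
Proof.
case/ternary_setP => X _ ->; split.
  by rewrite sum_set_pow3 sum_pow3_lt // => i; have := set_indicator_lt X i; lia.
by apply/ternary01P => i; rewrite tdigit_sum_set; case: ifP => // _; apply: set_indicator_lt.
Qed.

Lemma ternary_set0 k (F : {set {set 'I_k}}) :
  F != set0 -> down_closed F -> 0 \in ternary_set F.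
Proof.
case/set0Pn => X FX F_dc; apply/ternary_setP; exists set0; last by rewrite big_set0.
exact: F_dc FX (sub0set X).
Qed.

Lemma ternary_set_digit_le k (F : {set {set 'I_k}}) a b : down_closed F ->
  (forall i, tdigit i a <= tdigit i b) -> ternary01 a -> a < 3 ^ k ->
  b \in ternary_set F -> a \in ternary_set F.
Proof.
move=> F_dc le_ab /ternary01P Ta lt_a /ternary_setP [X FX eb].
rewrite {}eb in le_ab.
apply/ternary_setP; exists [set i : 'I_k | tdigit i a == 1].
  apply: F_dc FX _; apply/subsetP => i; rewrite inE => /eqP ai.
  by have := le_ab i; rewrite tdigit_sum_set ltn_ord set_indicator_ord ai; case: (i \in X).
rewrite sum_set_pow3 {1}(ternary_expansion lt_a); apply: eq_bigr => i _.
by rewrite set_indicator_ord inE; have := Ta i; case: (tdigit i a) => [|[|]].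
Qed.

Definition enum_below (P : pred nat) (M : nat) : seq nat := [seq x <- iota 0 M | P x].

Lemma enum_belowD (P : pred nat) M n :
  enum_below P (M + n) = enum_below P M ++ [seq x <- iota M n | P x].
Proof. by rewrite /enum_below iotaD filter_cat. Qed.

Lemma mem_enum_below (P : pred nat) M x : (x \in enum_below P M) = (x < M) && P x.
Proof. by rewrite mem_filter mem_iota andbC. Qed.

Lemma last_enum_below (P : pred nat) M : 0 < M -> P M.-1 -> last 0 (enum_below P M) = M.-1.
Proof.
move=> M_gt0 PM; have {1}-> : M = M.-1 + 1 by lia.
by rewrite enum_belowD /= PM last_cat.
Qed.

Lemma nth_enum_below (P : pred nat) M M' n : n < size (enum_below P M) ->
  n < size (enum_below P M') -> nth 0 (enum_below P M) n = nth 0 (enum_below P M') n.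
Proof.
wlog le_M : M M' / M <= M'.
  by move=> W lt_n lt_n'; case: (leqP M M') => [|/ltnW] le; [|symmetry]; apply: W.
by move=> lt_n _; rewrite -(subnKC le_M) enum_belowD nth_cat lt_n.
Qed.

Definition ap3_saturated (P : pred nat) (t : nat) : Prop :=
  forall n, t < n -> ~~ P n ->
  exists x y, [/\ P x, P y, x < y, y < n & x + n = 2 * y].

Lemma ap3_free_three_free (P : pred nat) s : ap3_free P -> all P s -> three_free s.
Proof.
move=> P_free /allP Ps; apply/allP => x sx; apply/allP => y sy; apply/allP => z sz.
apply/negP => /andP[/andP[lt_xy lt_yz] /eqP e].
have := P_free x y z (Ps _ sx) (Ps _ sy) (Ps _ sz); rewrite e -mul2n; lia.
Qed.

Lemma ap3_not_three_free s x y z : x \in s -> y \in s -> z \in s ->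
  x < y -> y < z -> x + z = 2 * y -> ~~ three_free s.
Proof.
move=> sx sy sz lt_xy lt_yz e.
apply/negP => /allP /(_ x sx) /allP /(_ y sy) /allP /(_ z sz).
by rewrite lt_xy lt_yz e -mul2n eqxx.
Qed.

Lemma enum_below_gap (P : pred nat) M n : (forall x, x < n -> P (M + x) = false) ->
  enum_below P (M + n) = enum_below P M.
Proof.
move=> notP; rewrite enum_belowD -[RHS]cats0; congr (_ ++ _).
rewrite -(filter_pred0 (iota M n)); apply: eq_in_filter => x.
by rewrite mem_iota => /andP[le_x lt_x]; have := notP (x - M) ltac:(lia); rewrite subnKC.
Qed.

Lemma find_iota0 (R : pred nat) n i :
  i < n -> R i -> (forall j, j < i -> ~~ R j) -> find R (iota 0 n) = i.
Proof.
move=> lt_i Ri notR; have has_R : has R (iota 0 n).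
  by apply/hasP; exists i; rewrite ?mem_iota.
case: (ltngtP (find R (iota 0 n)) i) => // cmp.
- have := nth_find 0 has_R; rewrite nth_iota ?add0n; last exact: ltn_trans lt_i.
  by move/negP: (notR _ cmp).
- by have := before_find 0 cmp; rewrite nth_iota ?add0n // Ri.
Qed.

Section GreedyEnumeration.

Variables (P : pred nat) (t : nat).
Hypotheses (P_free : ap3_free P) (P_sat : ap3_saturated P t).

Lemma exists_member_after M : t < M -> exists j, (j < M) && P (M + j).
Proof.
move=> lt_tM; case: (boolP (has (fun j => P (M + j)) (iota 0 M))) => [/hasP[j]|/hasPn notP].
  by rewrite mem_iota add0n => /andP[_ lt_j] PMj; exists j; rewrite lt_j.
have notP' j : j < M -> ~~ P (M + j) by move=> lt_j; apply: notP; rewrite mem_iota.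
have [x [y [Px Py lt_xy lt_y e]]] := P_sat (n := M + M.-1) ltac:(lia) (notP' M.-1 ltac:(lia)).
case: (ltnP y M) => le_y; first by lia.
by have := notP' (y - M) ltac:(lia); rewrite subnKC // Py.
Qed.

Lemma next_term_enum_below M i : t < M -> P M.-1 -> i <= M -> P (M + i) ->
  (forall j, j < i -> ~~ P (M + j)) -> next_term (enum_below P M) = M + i.
Proof.
move=> lt_tM PM le_i PMi notP.
rewrite /next_term last_enum_below ?prednK //; try lia.
congr (_ + _); apply: find_iota0 => [|| j lt_j]; first by lia.
- apply: ap3_free_three_free P_free _; rewrite all_rcons PMi /=.
  by apply/allP => x; rewrite mem_enum_below => /andP[].
- have [x [y [Px Py lt_xy lt_y e]]] := P_sat (n := M + j) ltac:(lia) (notP j lt_j).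
  have lt_yM : y < M.
    case: (ltnP y M) => // le_y; have := notP (y - M) ltac:(lia).
    by rewrite subnKC // Py.
  apply: (ap3_not_three_free (x := x) (y := y) (z := M + j)) => //.
  + by rewrite mem_rcons inE mem_enum_below Px (ltn_trans lt_xy lt_yM) orbT.
  + by rewrite mem_rcons inE mem_enum_below Py lt_yM orbT.
  + by rewrite mem_rcons inE eqxx.
Qed.

Lemma enum_below_next M : t < M -> P M.-1 -> exists i,
  rcons (enum_below P M) (next_term (enum_below P M)) = enum_below P (M + i.+1)
  /\ P (M + i).
Proof.
move=> lt_tM PM.
have [i /andP[lt_i PMi] min_i] := ex_minnP (exists_member_after lt_tM).
have notP j : j < i -> ~~ P (M + j).
  by move=> lt_j; apply/negP => PMj; have := min_i j; rewrite PMj andbT; lia.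
exists i; split=> //.
rewrite (next_term_enum_below lt_tM PM (ltnW lt_i) PMi notP).
rewrite addnS -addn1 enum_belowD enum_below_gap /= ?PMi ?cats1 //.
by move=> j /notP /negbTE.
Qed.

Lemma extend_enum_below init : P t -> init = enum_below P t.+1 -> forall n, exists M,
  [/\ extend init n = enum_below P M, t < M, P M.-1
    & size (enum_below P M) = size init + n].
Proof.
move=> Pt ->; elim=> [|n [M [e lt_tM PM size_M]]]; first by exists t.+1; rewrite addn0.
have [i [e' PMi]] := enum_below_next lt_tM PM.
exists (M + i.+1); split; first by rewrite /extend iterS -/(extend _ n) e.
- lia.
- by rewrite addnS.
- by rewrite -e' size_rcons size_M addnS.
Qed.

Lemma stanley_enum_below (A : seq nat) : P t -> sort leq (undup A) = enum_below P t.+1 ->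
  forall n M, n < size (enum_below P M) -> stanley A n = nth 0 (enum_below P M) n.
Proof.
move=> Pt initA n M lt_n.
have [M' [e _ _ size_M']] := extend_enum_below Pt initA n.+1.
by rewrite /stanley e; apply: nth_enum_below => //; rewrite size_M'; lia.
Qed.

End GreedyEnumeration.

Lemma enum_below_double (P : pred nat) Q : (forall x, x < Q -> P (Q + x) = P x) ->
  enum_below P (Q + Q) = enum_below P Q ++ map (addn Q) (enum_below P Q).
Proof.
move=> P_shift; rewrite enum_belowD; congr (_ ++ _).
rewrite -{1}(addn0 Q) iotaDl filter_map /enum_below; congr map.
by apply: eq_in_filter => x; rewrite mem_iota => /andP[_ lt_x]; rewrite /preim /= P_shift.
Qed.

Section SelfSimilarIndependence.

Variables (P : pred nat) (N m : nat) (e : nat -> nat).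
Hypotheses (N_gt0 : 0 < N) (P0 : P 0) (size_N : size (enum_below P N) = 2 ^ m).
Hypothesis P_shift : forall j x, x < N * 3 ^ j -> P (N * 3 ^ j + x) = P x.
Hypothesis P_gap : forall j x, x < N * 3 ^ j -> P (N * 3 ^ j + N * 3 ^ j + x) = false.
Hypothesis e_enum : forall n M, n < size (enum_below P M) -> e n = nth 0 (enum_below P M) n.

Lemma enum_below_scale j : enum_below P (N * 3 ^ j.+1) =
  enum_below P (N * 3 ^ j) ++ map (addn (N * 3 ^ j)) (enum_below P (N * 3 ^ j)).
Proof.
have -> : N * 3 ^ j.+1 = (N * 3 ^ j + N * 3 ^ j) + N * 3 ^ j by rewrite expnS; lia.
by rewrite enum_below_gap; [apply: enum_below_double; apply: P_shift | apply: P_gap].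
Qed.

Lemma size_enum_below_scale j : size (enum_below P (N * 3 ^ j)) = 2 ^ (m + j).
Proof.
elim: j => [|j IH]; first by rewrite expn0 muln1 addn0.
by rewrite enum_below_scale size_cat size_map IH addnS expnS; lia.
Qed.

Lemma enum_shift j i : i < 2 ^ (m + j) -> e (2 ^ (m + j) + i) = N * 3 ^ j + e i.
Proof.
move=> lt_i.
rewrite (e_enum (M := N * 3 ^ j.+1)); last first.
  by rewrite enum_below_scale size_cat size_map size_enum_below_scale; lia.
rewrite (e_enum (M := N * 3 ^ j)) ?size_enum_below_scale //.
rewrite enum_below_scale nth_cat size_enum_below_scale ltnNge leq_addr /= addKn.
by rewrite (nth_map 0) // size_enum_below_scale.
Qed.

Lemma enum0 : e 0 = 0.
Proof.
rewrite (e_enum (M := N)) ?size_N ?expn_gt0 //.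
have -> : N = 1 + (N - 1) by lia.
by rewrite enum_belowD /enum_below /= P0.
Qed.

Lemma enum_pow2 j : e (2 ^ (m + j)) = N * 3 ^ j.
Proof. by rewrite -(addn0 (2 ^ (m + j))) enum_shift ?enum0 ?addn0 // expn_gt0. Qed.

Lemma enum_pow2_pred j :
  2 * e (2 ^ (m + j) - 1) + N = N * 3 ^ j + 2 * e (2 ^ m - 1).
Proof.
elim: j => [|j IH]; first by rewrite addn0 expn0 muln1; lia.
have pos := expn_gt0 2 (m + j).
have -> : 2 ^ (m + j.+1) - 1 = 2 ^ (m + j) + (2 ^ (m + j) - 1).
  by rewrite addnS expnS; lia.
by rewrite enum_shift ?expnS; lia.
Qed.

Lemma independent_enum : independent e.
Proof.
exists ((2 * e (2 ^ m - 1) + 1)%N%:Z - N%:Z)%R, m => k le_mk.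
have -> : k = m + (k - m) by lia.
split; first by move=> i lt_i; rewrite enum_shift // enum_pow2.
by rewrite enum_pow2; have := enum_pow2_pred (k - m); lia.
Qed.

End SelfSimilarIndependence.

Lemma count_iota_mul (P : pred nat) K c : count P (iota 0 (K * c)) =
  sumn [seq count (fun w => P (w + K * h)) (iota 0 K) | h <- iota 0 c].
Proof.
elim: c => [|c IH]; first by rewrite muln0.
rewrite mulnS addnC iotaD count_cat IH add0n -{1}(addn0 (K * c)) iotaDl count_map.
rewrite -addn1 iotaD map_cat sumn_cat /= addn0 add0n; congr (_ + _).
by apply: eq_count => w; rewrite /preim /= addnC.
Qed.

Lemma count_predI_if (p q : pred nat) (bA bD : bool) s :
  count (fun w => p w && (if q w then bA else bD)) s =
  bA * count (fun w => p w && q w) s + bD * count (fun w => p w && ~~ q w) s.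
Proof.
elim: s => [|x s IH] /=; first by rewrite !muln0.
by rewrite {}IH; case: (p x); case: (q x); case: bA; case: bD => /=; lia.
Qed.

Lemma count_predI_predC (p q : pred nat) s :
  count (fun w => p w && q w) s + count (fun w => p w && ~~ q w) s = count p s.
Proof. by elim: s => [|x s IH] //=; rewrite -IH; case: (p x); case: (q x) => /=; lia. Qed.

Lemma sumn_map_lin (a b : nat -> nat) x y s :
  sumn [seq a h * x + b h * y | h <- s] = sumn (map a s) * x + sumn (map b s) * y.
Proof. by elim: s => //= h s ->; lia. Qed.

Lemma count_ternary01 k : count ternary01 (iota 0 (3 ^ k)) = 2 ^ k.
Proof.
elim: k => [|k IH] //; rewrite expnS mulnC count_iota_mul /=.
have count_digit r : r < 3 ->
    count (fun w => ternary01 (w + 3 ^ k * r)) (iota 0 (3 ^ k)) = (r < 2) * 2 ^ k.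
  move=> lt_r; rewrite (@eq_in_count _ _ (fun w => ternary01 w && (r < 2))); last first.
    by move=> w; rewrite mem_iota => /andP[_ lt_w]; rewrite ternary01_high.
  rewrite -IH; case: (r < 2); rewrite ?mul1n ?mul0n.
    by apply: eq_count => w; rewrite andbT.
  by elim: (iota 0 (3 ^ k)) => //= x s ->; rewrite andbF.
by rewrite !count_digit // expnS; lia.
Qed.

Definition midpoint_cover (X Y : pred nat) (h : nat) : Prop :=
  exists a b, [/\ X a, Y b, a + h = 2 * b & b <= h].

Definition tri_periodic (U : pred nat) : Prop := forall p h, 1 < p -> h < 3 ^ p ->
  U (3 ^ p + h) = U h /\ U (3 ^ p + 3 ^ p + h) = false.

(* Admissibility of (UA, UD)
   with parameter t makes it the Stanley sequence S(A u {3^k t}). *)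
Definition stack k (F : {set {set 'I_k}}) (UA UD : pred nat) (n : nat) : bool :=
  ternary01 (n %% 3 ^ k) &&
  (if n %% 3 ^ k \in ternary_set F then UA (n %/ 3 ^ k) else UD (n %/ 3 ^ k)).

Record admissible (UA UD : pred nat) (t : nat) : Prop := Admissible {
  admissible_freeA : ap3_free UA;
  admissible_freeD : ap3_free UD;
  admissible_cover : forall h, t <= h ->
    [/\ midpoint_cover UA UA h, midpoint_cover UD UD h & midpoint_cover UA UD h];
  admissible_A0 : UA 0;
  admissible_At : UA t;
  admissible_A_gap : forall h, 0 < h -> h < t -> UA h = false;
  admissible_D_gap : forall h, h < t -> UD h = false;
  admissible_t_gt0 : 0 < t;
  admissible_periodicA : tri_periodic UA;
  admissible_periodicD : tri_periodic UD;
  admissible_countA : count UA (iota 0 9) = 4;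
  admissible_countD : count UD (iota 0 9) = 4 }.

Section Stack.

Variables (k : nat) (F : {set {set 'I_k}}) (UA UD : pred nat) (t : nat).
Hypotheses (adm : admissible UA UD t) (F_neq0 : F != set0) (F_dc : down_closed F).

Local Notation A := (ternary_set F).
Local Notation S := (stack F UA UD).

Lemma pow3_gt0 : 0 < 3 ^ k. Proof. exact: expn_gt0. Qed.

Lemma pow3_split n : exists w h, w < 3 ^ k /\ n = w + 3 ^ k * h.
Proof.
exists (n %% 3 ^ k), (n %/ 3 ^ k); split; first by rewrite ltn_mod pow3_gt0.
by rewrite mulnC addnC -divn_eq.
Qed.

Lemma pow3_splitE w h : w < 3 ^ k ->
  (w + 3 ^ k * h) %% 3 ^ k = w /\ (w + 3 ^ k * h) %/ 3 ^ k = h.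
Proof.
move=> lt_w; rewrite addnC mulnC modnMDl divnMDl ?pow3_gt0 //.
by rewrite modn_small // divn_small // addn0.
Qed.

Lemma pow3_split_inj w h w' h' : w < 3 ^ k -> w' < 3 ^ k ->
  w + 3 ^ k * h = w' + 3 ^ k * h' -> w = w' /\ h = h'.
Proof.
move=> lt_w lt_w' e; have [mod_w div_w] := pow3_splitE h lt_w.
have [mod_w' div_w'] := pow3_splitE h' lt_w'.
by split; [rewrite -mod_w e mod_w' | rewrite -div_w e div_w'].
Qed.

Lemma stackE w h : w < 3 ^ k ->
  S (w + 3 ^ k * h) = ternary01 w && (if w \in A then UA h else UD h).
Proof. by move=> lt_w; rewrite /stack; have [-> ->] := pow3_splitE h lt_w. Qed.

Lemma stack_ap3_free : ap3_free S.
Proof.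
move=> x y z.
have [wx [hx [lt_wx ->]]] := pow3_split x.
have [wy [hy [lt_wy ->]]] := pow3_split y.
have [wz [hz [lt_wz ->]]] := pow3_split z.
rewrite !stackE // => /andP[Tx Ux] /andP[Ty Uy] /andP[Tz Uz] e.
have [ew eh] : wx + wz = 2 * wy /\ hx + hz = 2 * hy.
  apply: pow3_split_inj; last by lia.
  - by have := ternary01_double_lt Tx lt_wx; have := ternary01_double_lt Tz lt_wz; lia.
  - exact: ternary01_double_lt Ty lt_wy.
have exy := ternary01_ap3_free Tx Ty Tz ew.
have ezy : wz = wy by lia.
subst wx wz; congr (_ + _ * _).
move: Ux Uy Uz; case: (wy \in A) => Ux Uy Uz.
- exact: admissible_freeA adm _ _ _ Ux Uy Uz eh.
- exact: admissible_freeD adm _ _ _ Ux Uy Uz eh.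
Qed.

Lemma stack_saturated : ap3_saturated S (3 ^ k * t).
Proof.
move=> n lt_n notSn; have [w [h [lt_w en]]] := pow3_split n; subst n.
have le_th : t <= h.
  rewrite leqNgt; apply/negP => lt_h.
  have : 3 ^ k * h.+1 <= 3 ^ k * t by rewrite leq_mul2l lt_h orbT.
  by rewrite mulnS; lia.
have [a [b [Ta Tb e le_b dig]]] := ternary01_midpoint w.
have lt_a : a < 3 ^ k by lia.
have lt_b : b < 3 ^ k by lia.
have [ha [hb [Ua Ub eh le_hb]]] : exists ha hb,
    [/\ (if a \in A then UA else UD) ha, (if b \in A then UA else UD) hb,
        ha + h = 2 * hb & hb <= h].
  have [coverAA coverDD coverAD] := admissible_cover adm le_th.
  case Ab: (b \in A); first by rewrite (ternary_set_digit_le F_dc dig Ta lt_a Ab).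
  by case: (a \in A).
have Sa : S (a + 3 ^ k * ha) by rewrite stackE // Ta; move: Ua; case: (a \in A).
have Sb : S (b + 3 ^ k * hb) by rewrite stackE // Tb; move: Ub; case: (b \in A).
have le_y : b + 3 ^ k * hb <= w + 3 ^ k * h.
  by apply: leq_add => //; rewrite leq_mul2l le_hb orbT.
have ne_y : b + 3 ^ k * hb != w + 3 ^ k * h by apply: contraNneq notSn => <-.
exists (a + 3 ^ k * ha), (b + 3 ^ k * hb); split=> //; lia.
Qed.

Lemma stack_top : S (3 ^ k * t).
Proof.
rewrite -(add0n (3 ^ k * t)) stackE ?pow3_gt0 // ternary_set0 //=.
exact: admissible_At adm.
Qed.

Lemma stack_initial x : x <= 3 ^ k * t -> S x = (x \in A) || (x == 3 ^ k * t).
Proof.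
move=> le_x; have t_gt0 := admissible_t_gt0 adm.
have lt_kt : 3 ^ k <= 3 ^ k * t by rewrite leq_pmulr.
case: (ltnP x (3 ^ k)) => [lt_x|le_kx].
  rewrite -[x]addn0 -(muln0 (3 ^ k)) stackE // (admissible_A0 adm).
  rewrite (admissible_D_gap adm t_gt0) muln0 addn0 (_ : x == _ = false) ?orbF; last by lia.
  by case Ax: (x \in A); rewrite ?andbT ?andbF //; have [] := ternary_set_ternary01 Ax.
have notAx : x \notin A by apply: contraTN le_kx => /ternary_set_ternary01[lt_x _]; lia.
rewrite (negbTE notAx) /=.
have [w [h [lt_w ex]]] := pow3_split x; rewrite ex stackE //.
case: (ltnP h t) => [lt_h|le_th].
- have h_gt0 : 0 < h by case: h {lt_h} ex => [|h] ex //; lia.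
  rewrite (admissible_D_gap adm lt_h) (admissible_A_gap adm h_gt0 lt_h) if_same andbF.
  have : 3 ^ k * h.+1 <= 3 ^ k * t by rewrite leq_mul2l lt_h orbT.
  by rewrite mulnS; lia.
- have : 3 ^ k * t <= 3 ^ k * h by rewrite leq_mul2l le_th orbT.
  move=> le_kth; have w0 : w = 0 by lia.
  have eth : h = t by apply/eqP; rewrite eqn_leq le_th andbT -(leq_pmul2l pow3_gt0); lia.
  by rewrite w0 eth ternary_set0 //= (admissible_At adm) eqxx.
Qed.

Lemma stack_initial_segment :
  sort leq (undup (rcons A (3 ^ k * t))) = enum_below S (3 ^ k * t).+1.
Proof.
apply: (irr_sorted_eq ltn_trans ltnn).
- by rewrite ltn_sorted_uniq_leq sort_uniq undup_uniq sort_sorted //; apply: leq_total.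
- by apply: sorted_filter; [apply: ltn_trans | apply: iota_ltn_sorted].
move=> x; rewrite mem_sort mem_undup mem_rcons inE mem_enum_below ltnS orbC.
case: (leqP x (3 ^ k * t)) => [le_x|lt_x] /=; first by rewrite stack_initial.
rewrite (_ : x == _ = false) ?orbF; last by lia.
apply/negbTE; apply: contraTN lt_x => /ternary_set_ternary01[lt_x _]; rewrite -leqNgt.
by apply: leq_trans (ltnW lt_x) _; rewrite leq_pmulr // (admissible_t_gt0 adm).
Qed.

Lemma stack_periodic j x : x < 3 ^ k * 9 * 3 ^ j ->
  S (3 ^ k * 9 * 3 ^ j + x) = S x /\
  S (3 ^ k * 9 * 3 ^ j + 3 ^ k * 9 * 3 ^ j + x) = false.
Proof.
have -> : 3 ^ k * 9 * 3 ^ j = 3 ^ k * 3 ^ j.+2 by rewrite !expnS; lia.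
have [w [h [lt_w ->]]] := pow3_split x => lt_x.
have lt_h : h < 3 ^ j.+2 by rewrite -(ltn_pmul2l pow3_gt0); lia.
have -> : 3 ^ k * 3 ^ j.+2 + (w + 3 ^ k * h) = w + 3 ^ k * (3 ^ j.+2 + h) by lia.
have -> : 3 ^ k * 3 ^ j.+2 + 3 ^ k * 3 ^ j.+2 + (w + 3 ^ k * h) =
    w + 3 ^ k * (3 ^ j.+2 + 3 ^ j.+2 + h) by lia.
rewrite !stackE //; case: (w \in A).
- by have [-> ->] := admissible_periodicA adm (isT : 1 < j.+2) lt_h; rewrite andbF.
- by have [-> ->] := admissible_periodicD adm (isT : 1 < j.+2) lt_h; rewrite andbF.
Qed.

Lemma size_stack : size (enum_below S (3 ^ k * 9)) = 2 ^ (k + 2).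
Proof.
rewrite /enum_below size_filter count_iota_mul.
set cA := count (fun w => ternary01 w && (w \in A)) (iota 0 (3 ^ k)).
set cD := count (fun w => ternary01 w && ~~ (w \in A)) (iota 0 (3 ^ k)).
have count_h h :
    count (fun w => S (w + 3 ^ k * h)) (iota 0 (3 ^ k)) = UA h * cA + UD h * cD.
  rewrite -count_predI_if; apply: eq_in_count => w.
  by rewrite mem_iota => /andP[_ lt_w]; rewrite stackE.
have sum_c : cA + cD = 2 ^ k by rewrite count_predI_predC count_ternary01.
rewrite (eq_map count_h) sumn_map_lin !sumn_count.
by rewrite (admissible_countA adm) (admissible_countD adm) expnD -sum_c; lia.
Qed.

Lemma stack_independent : independent (stanley (rcons A (3 ^ k * t))).
Proof.
apply: (independent_enum (P := S) (N := 3 ^ k * 9) (m := k + 2)).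
- by rewrite muln_gt0 pow3_gt0.
- by rewrite stack_initial // ternary_set0.
- exact: size_stack.
- by move=> j x /stack_periodic[].
- by move=> j x /stack_periodic[].
- move=> n M; apply: (stanley_enum_below stack_ap3_free stack_saturated stack_top).
  exact: stack_initial_segment.
Qed.

End Stack.

Definition ternary01_shifted (s h : nat) : bool := (s <= h) && ternary01 (h - s).

Lemma ternary01_shifted_ap3_free s : ap3_free (ternary01_shifted s).
Proof.
move=> a b c /andP[le_a Ta] /andP[le_b Tb] /andP[le_c Tc] e.
by have := ternary01_ap3_free Ta Tb Tc ltac:(lia); lia.
Qed.

Lemma ternary01_shifted_cover s h : s <= h ->
  midpoint_cover (ternary01_shifted s) (ternary01_shifted s) h.
Proof.
move=> le_h; have [a [b [Ta Tb e le_b _]]] := ternary01_midpoint (h - s).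
exists (a + s), (b + s); split; rewrite /ternary01_shifted ?addnK ?leq_addl //; lia.
Qed.

Lemma ternary01_pow3_sub p c d : 1 < p -> 0 < c -> 0 < d <= 2 ->
  ternary01 (c * 3 ^ p - d) = false.
Proof.
move=> lt_p c_gt0 /andP[d_gt0 le_d].
have -> : 3 ^ p = 9 * 3 ^ (p - 2) by rewrite -[9]/(3 ^ 2) -expnD subnKC.
have pos : 0 < 3 ^ (p - 2) by rewrite expn_gt0.
rewrite ternary01E; case: d d_gt0 le_d => [|[|[|]]] // _ _.
- by rewrite (_ : _ %% 3 = 2) //; lia.
- by rewrite ternary01_mod3_2 ?andbF //; lia.
Qed.

Lemma ternary01_shifted_periodic s : s <= 2 -> tri_periodic (ternary01_shifted s).
Proof.
move=> le_s p h lt_p lt_h; rewrite /ternary01_shifted.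
have le_s_pow : s <= 3 ^ p by apply: leq_trans (ltn_expl p (isT : 1 < 3)); lia.
have -> : s <= 3 ^ p + h by lia.
have -> /= : s <= 3 ^ p + 3 ^ p + h by lia.
case: (leqP s h) => [le_sh|lt_hs].
  by rewrite -!addnBA // ternary01_shift ?ternary01_shift2 //; lia.
have sub_pow c : 0 < c -> ternary01 (c * 3 ^ p + h - s) = false.
  by move=> c_gt0; rewrite (_ : _ - s = c * 3 ^ p - (s - h)) ?ternary01_pow3_sub //; lia.
have := sub_pow 1 isT; have := sub_pow 2 isT.
by rewrite mul1n mul2n -addnn => -> ->.
Qed.

Lemma ternary01_shifted_add s x : ternary01_shifted s (s + x) = ternary01 x.
Proof. by rewrite /ternary01_shifted leq_addr addKn. Qed.

Lemma ternary01_shifted1_cover h : 0 < h ->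
  midpoint_cover ternary01 (ternary01_shifted 1) h.
Proof.
move=> h_gt0; have [a [b [Ta Tb e le_b]]] := ternary01_midpoint_odd (h - 1).
by exists a, (1 + b); rewrite ternary01_shifted_add; split=> //; lia.
Qed.

Lemma admissible_pow3 : admissible ternary01 (ternary01_shifted 1) 1.
Proof.
split=> //.
- exact: ternary01_ap3_free.
- exact: ternary01_shifted_ap3_free.
- move=> h le_h; split; [|exact: ternary01_shifted_cover|exact: ternary01_shifted1_cover].
  by have [a [b [Ta Tb e le_b _]]] := ternary01_midpoint h; exists a, b.
- by move=> h; lia.
- by case.
- by move=> p h _ lt_h; rewrite ternary01_shift ?ternary01_shift2.
- exact: ternary01_shifted_periodic.
Qed.

Definition ternary01_last02 (h : nat) : bool := (h %% 3 != 1) && ternary01 (h %/ 3).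

Lemma ternary01_last02_digit r a : r < 3 ->
  ternary01_last02 (r + 3 * a) = (r != 1) && ternary01 a.
Proof. by move=> lt_r; rewrite /ternary01_last02 modn_digit // divn_digit. Qed.

Lemma ternary01_last02_ap3_free : ap3_free ternary01_last02.
Proof.
move=> a b c /andP[/eqP ra Ta] /andP[/eqP rb Tb] /andP[/eqP rc Tc] e.
by have := ternary01_ap3_free Ta Tb Tc ltac:(lia); lia.
Qed.

Lemma ternary01_last02_cover h : 2 <= h ->
  midpoint_cover ternary01_last02 ternary01_last02 h.
Proof.
move=> le_h; have : h %% 3 < 3 by rewrite ltn_mod.
case E: (h %% 3) => [|[|[|]]] // _.
- have [a [b [Ta Tb e le_b _]]] := ternary01_midpoint (h %/ 3).
  by exists (0 + 3 * a), (0 + 3 * b); rewrite !ternary01_last02_digit //; split=> //; lia.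
- have [a [b [Ta Tb e lt_b]]] := @ternary01_midpoint_odd_lt (h %/ 3) ltac:(lia).
  by exists (0 + 3 * a), (2 + 3 * b); rewrite !ternary01_last02_digit //; split=> //; lia.
- have [a [b [Ta Tb e le_b _]]] := ternary01_midpoint (h %/ 3).
  by exists (2 + 3 * a), (2 + 3 * b); rewrite !ternary01_last02_digit //; split=> //; lia.
Qed.

Lemma ternary01_last02_shifted2_cover h : 2 <= h ->
  midpoint_cover ternary01_last02 (ternary01_shifted 2) h.
Proof.
move=> le_h; have : (h - 2) %% 3 < 3 by rewrite ltn_mod.
case E: ((h - 2) %% 3) => [|[|[|]]] // _.
- have [a [b [Ta Tb e le_b _]]] := ternary01_midpoint ((h - 2) %/ 3).
  exists (2 + 3 * a), (2 + (0 + 3 * b)).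
  by rewrite ternary01_last02_digit // ternary01_shifted_add ternary01_digit //; split=> //; lia.
- have [a [b [Ta Tb e le_b]]] := ternary01_midpoint_odd ((h - 2) %/ 3).
  exists (0 + 3 * a), (2 + (1 + 3 * b)).
  by rewrite ternary01_last02_digit // ternary01_shifted_add ternary01_digit //; split=> //; lia.
- have [a [b [Ta Tb e le_b _]]] := ternary01_midpoint ((h - 2) %/ 3).
  exists (0 + 3 * a), (2 + (0 + 3 * b)).
  by rewrite ternary01_last02_digit // ternary01_shifted_add ternary01_digit //; split=> //; lia.
Qed.

Lemma ternary01_last02_periodic : tri_periodic ternary01_last02.
Proof.
move=> p h lt_p lt_h; rewrite /ternary01_last02.
have pos : 0 < 3 ^ p.-1 by rewrite expn_gt0.
have E : 3 ^ p = 3 * 3 ^ p.-1 by rewrite -expnS prednK //; lia.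
have lt_h3 : h %/ 3 < 3 ^ p.-1 by lia.
have -> : (3 ^ p + h) %% 3 = h %% 3 by lia.
have -> : (3 ^ p + h) %/ 3 = 3 ^ p.-1 + h %/ 3 by lia.
have -> : (3 ^ p + 3 ^ p + h) %/ 3 = 3 ^ p.-1 + 3 ^ p.-1 + h %/ 3 by lia.
by rewrite ternary01_shift // ternary01_shift2 // andbF.
Qed.

Lemma admissible_2pow3 : admissible ternary01_last02 (ternary01_shifted 2) 2.
Proof.
split=> //.
- exact: ternary01_last02_ap3_free.
- exact: ternary01_shifted_ap3_free.
- move=> h le_h; split; first exact: ternary01_last02_cover.
    exact: ternary01_shifted_cover.
  exact: ternary01_last02_shifted2_cover.
- by move=> [|[|]].
- by move=> [|[|]].
- exact: ternary01_last02_periodic.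
- exact: ternary01_shifted_periodic.
Qed.

Unset Implicit Arguments.

Theorem theorem1 (k : nat) (F : {set {set 'I_k}}) :
  0 < k -> F != set0 -> down_closed F ->
  independent (stanley (rcons (ternary_set F) (3 ^ k))) /\
  independent (stanley (rcons (ternary_set F) (2 * 3 ^ k))).
Proof.
move=> _ F_neq0 F_dc; split.
- by have := stack_independent admissible_pow3 F_neq0 F_dc; rewrite muln1.
- by have := stack_independent admissible_2pow3 F_neq0 F_dc; rewrite mulnC.
Qed.
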